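(* Let $R$ be an associative ring with identity. The following are equivalent: (1) $R$ is NJ-symmetric; (2) for all $a,b,c\in R$, $abc\in N(R)$ implies $acb\in J(R)$; (3) for all $a,b,c\in R$, $abc\in N(R)$ implies $cba\in J(R)$.
   Context: $N(R)$ is the set of nilpotent elements of $R$ and $J(R)$ is the Jacobson radical of $R$. A ring $R$ is called NJ-symmetric if for all $a,b,c\in R$, $abc\in N(R)$ implies $bac\in J(R)$. *)

From HB Require Import structures.
From mathcomp Require Import all_boot all_algebra.
Set Implicit Arguments. Unset Strict Implicit. Unset Printing Implicit Defensive.
Import GRing.Theory.
Local Open Scope ring_scope.

Definition nilpotent_el (R : pzRingType) (x : R) : Prop := exists n : nat, x ^+ n = 0.

Definition left_ideal (R : pzRingType) (I : R -> Prop) : Prop :=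
  [/\ I 0, (forall x y, I x -> I y -> I (x - y)) & (forall r x, I x -> I (r * x))].

Definition maximal_left_ideal (R : pzRingType) (I : R -> Prop) : Prop :=
  [/\ left_ideal I, ~ I 1 &
      forall K : R -> Prop, left_ideal K -> ~ K 1 -> (forall x, I x -> K x) ->
        forall x, K x -> I x].

Definition jacobson (R : pzRingType) (x : R) : Prop :=
  forall I : R -> Prop, maximal_left_ideal I -> I x.

Definition NJ_symmetric (R : pzRingType) : Prop :=
  forall a b c : R, nilpotent_el (a * b * c) -> jacobson (b * a * c).

(* Nilpotency of a product is invariant under cyclic rotation of its factors,
   since (yx)^(n+1) = y (xy)^n x.  Each of the three conditions sends abc to a
   transposition of its factors, and any two transpositions of three letters
   differ by a cyclic rotation, so each condition applied to a rotated triple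
   yields the others. *)
From mathcomp Require Import all_boot all_algebra.
Set Implicit Arguments. Unset Strict Implicit. Unset Printing Implicit Defensive.
Local Open Scope ring_scope.
Import GRing.Theory.

Section RotateProducts.

Variable R : pzRingType.
Implicit Types x y a b c : R.

Lemma exprS_mulC x y (n : nat) :
  (y * x) ^+ n.+1 = y * (x * y) ^+ n * x.
Proof.
elim: n => [|n IHn]; first by rewrite expr1 expr0 mulr1.
by rewrite exprS IHn exprS !mulrA.
Qed.

Lemma nilpotent_mulC x y :
  nilpotent_el (x * y) -> nilpotent_el (y * x).
Proof. by case=> n xyn0; exists n.+1; rewrite exprS_mulC xyn0 mulr0 mul0r. Qed.

Lemma nilpotent_rotr a b c :
  nilpotent_el (a * b * c) -> nilpotent_el (c * a * b).
Proof. by move/nilpotent_mulC; rewrite mulrA. Qed.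

Lemma nilpotent_rotl a b c :
  nilpotent_el (a * b * c) -> nilpotent_el (b * c * a).
Proof. by move/nilpotent_rotr/nilpotent_rotr. Qed.

End RotateProducts.

Theorem proposition2p2 (R : pzRingType) :
  [/\ (NJ_symmetric R <->
        (forall a b c : R, nilpotent_el (a * b * c) -> jacobson (a * c * b))),
      (NJ_symmetric R <->
        (forall a b c : R, nilpotent_el (a * b * c) -> jacobson (c * b * a)))
    & ((forall a b c : R, nilpotent_el (a * b * c) -> jacobson (a * c * b)) <->
        (forall a b c : R, nilpotent_el (a * b * c) -> jacobson (c * b * a)))].
Proof.
rewrite /NJ_symmetric; split; split=> nj a b c abc_nil.
- exact: nj _ _ _ (nilpotent_rotr abc_nil).
- exact: nj _ _ _ (nilpotent_rotl abc_nil).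
- exact: nj _ _ _ (nilpotent_rotl abc_nil).
- exact: nj _ _ _ (nilpotent_rotr abc_nil).
- exact: nj _ _ _ (nilpotent_rotr abc_nil).
- exact: nj _ _ _ (nilpotent_rotl abc_nil).
Qed.
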